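(* Let $\mathbb{F}$ be a finite field and $\alpha\in\mathbb{F}$ with $\mathrm{ord}(\alpha)=n$. Define $H_{\min}\in\mathbb{F}[z]^{(n-1)\times n}$ as the matrix whose entry in row $j$ ($j=1,\ldots,n-1$) and column $\nu$ ($\nu=1,\ldots,n$) is $(\alpha^{n-\nu+1})^{j-1}z-(\alpha^{n-\nu+1})^j$. Then $H_{\min}$ is minimal and right invertible, and $G H_{\min}^{\mathsf T}=0$ where $G=\sum_{\nu=0}^{n-1}z^\nu\begin{pmatrix}1&\alpha^\nu&\alpha^{2\nu}&\ldots&\alpha^{(n-1)\nu}\end{pmatrix}\in\mathbb{F}[z]^{1\times n}$. Consequently $H_{\min}$ is a parity check matrix of the convolutional code $\mathrm{im}\,G$, i.e. $\mathrm{im}\,G=\{v\in\mathbb{F}[z]^n\mid vH_{\min}^{\mathsf T}=0\}$.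
   Context: $\mathrm{ord}(\alpha)$ is the multiplicative order of $\alpha$. A polynomial matrix $M\in\mathbb{F}[z]^{k\times n}$ is right invertible if $M\tilde M=I_k$ for some $\tilde M\in\mathbb{F}[z]^{n\times k}$. A full-row-rank matrix $M\in\mathbb{F}[z]^{k\times n}$ is minimal (a minimal basis in Forney's sense) if the sum of its row degrees is minimal among all polynomial matrices whose rows form a basis of the $\mathbb{F}[z]$-module $\mathrm{im}\,M$; equivalently, the matrix of coefficients of the highest row-degree terms has full row rank. A parity check matrix of $\mathcal{C}=\mathrm{im}\,G$ is a right invertible $H$ with $\mathcal{C}=\{v\mid vH^{\mathsf T}=0\}$. *)

From mathcomp Require Import all_boot all_order all_algebra all_field.
Set Implicit Arguments. Unset Strict Implicit. Unset Printing Implicit Defensive.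
Import GRing.Theory.
Local Open Scope ring_scope.

Section PolyMatrices.
Variable F : fieldType.

Definition in_im k n (M : 'M[{poly F}]_(k, n)) (v : 'rV[{poly F}]_n) : Prop :=
  exists u : 'rV[{poly F}]_k, v = u *m M.

Definition rows_indep k n (M : 'M[{poly F}]_(k, n)) : Prop :=
  forall u : 'rV[{poly F}]_k, u *m M = 0 -> u = 0.

Definition row_deg k n (M : 'M[{poly F}]_(k, n)) (i : 'I_k) : nat :=
  \max_(j < n) (size (M i j)).-1.

Definition sum_row_deg k n (M : 'M[{poly F}]_(k, n)) : nat :=
  \sum_(i < k) row_deg M i.

Definition rows_basis_of k n (M : 'M[{poly F}]_(k, n)) k' (N : 'M[{poly F}]_(k', n)) : Prop :=
  rows_indep N /\ (forall v, in_im M v <-> in_im N v).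

Definition minimal_basis k n (M : 'M[{poly F}]_(k, n)) : Prop :=
  rows_indep M /\
  forall k' (N : 'M[{poly F}]_(k', n)), rows_basis_of M N -> (sum_row_deg M <= sum_row_deg N)%N.

Definition right_invertible k n (M : 'M[{poly F}]_(k, n)) : Prop :=
  exists Mt : 'M[{poly F}]_(n, k), M *m Mt = 1%:M.

Definition parity_check k l n (G : 'M[{poly F}]_(k, n)) (H : 'M[{poly F}]_(l, n)) : Prop :=
  right_invertible H /\ (forall v : 'rV[{poly F}]_n, in_im G v <-> v *m H^T = 0).

End PolyMatrices.

(* H_min: row j = i+1, column nu = m+1; entry (a^(n-nu+1))^(j-1) z - (a^(n-nu+1))^j *)
Definition Hmin (F : fieldType) (n : nat) (a : F) : 'M[{poly F}]_(n.-1, n) :=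
  \matrix_(i < n.-1, m < n)
    (((a ^+ (n - m)) ^+ i)%:P * 'X - ((a ^+ (n - m)) ^+ i.+1)%:P).

Definition Gvand (F : fieldType) (n : nat) (a : F) : 'rV[{poly F}]_n :=
  \row_(m < n) \sum_(v < n) ('X ^+ v * (a ^+ (m * v))%:P).

From mathcomp Require Import all_boot all_order all_algebra all_field.
From mathcomp Require Import zify.
Set Implicit Arguments. Unset Strict Implicit. Unset Printing Implicit Defensive.
Import GRing.Theory.
Local Open Scope ring_scope.

(* Write [H_min = K V] with [K] the (n-1) x n matrix of rows [z e_i - e_(i+1)]
   and [V] the Vandermonde matrix at the nodes [a^(n-m)] = [a^-m], an inverse
   discrete Fourier matrix: the orthogonality of characters gives [U V = V U = n]
   for the Fourier matrix [U] at the nodes [a^m], and [G = (1, z, ..., z^(n-1)) U^T].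
   Thus [V] is invertible over F and [H_min] inherits from [K] a polynomial right
   inverse and the kernel spanned by [G]. Minimality is a degree count: the rows of
   [H_min] have degree <= 1; evaluating at [z = 0] shows that every basis of
   [im H_min] has at least n - 1 rows, and none of them is constant, since [im K],
   hence [im H_min], contains no nonzero constant vector. *)

Section PolyMatrix.
Variable F : fieldType.
Implicit Types (k n : nat).

Lemma right_invertible_rows_indep k n (M : 'M[{poly F}]_(k, n)) :
  right_invertible M -> rows_indep M.
Proof. by move=> [Mt MMt] u uM0; rewrite -[u]mulmx1 -MMt mulmxA uM0 mul0mx. Qed.

Lemma right_invertible_im_sub_leq k k' n (M : 'M[{poly F}]_(k, n)) (N : 'M_(k', n)) :
  right_invertible M -> (forall v, in_im M v -> in_im N v) -> (k <= k')%N.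
Proof.
move=> [Mt MMt] MN.
have rowMN i : exists w, row i M == w *m N.
  by have [|w ->] := MN (row i M); [exists 'e_i; exact: rowE | exists w].
pose W := \matrix_i xchoose (rowMN i).
have MWN : M = W *m N.
  by apply/row_matrixP => i; rewrite row_mul rowK; exact/eqP/(xchooseP (rowMN i)).
have := congr1 (map_mx (horner_eval (0 : F))) MMt.
rewrite MWN -mulmxA map_mxM map_mx1 => /(congr1 mxrank); rewrite mxrank1 => <-.
exact: leq_trans (mxrankM_maxl _ _) (rank_leq_col _).
Qed.

Lemma row_deg0_const k n (M : 'M[{poly F}]_(k, n)) i :
  row_deg M i = 0%N -> row i M = map_mx polyC (\row_j (M i j)`_0).
Proof.
move/eqP; rewrite -leqn0 => /bigmax_leqP Mi0.
apply/rowP => j; rewrite !mxE; apply: size1_polyC.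
by have := Mi0 j isT; case: size => [|[]].
Qed.

Lemma row_deg_gt0 k k' n (M : 'M[{poly F}]_(k, n)) (N : 'M_(k', n)) i :
  rows_indep N -> (forall v, in_im N v -> in_im M v) ->
  (forall c, in_im M (map_mx polyC c) -> c = 0) -> (0 < row_deg N i)%N.
Proof.
move=> indN NM noconst; rewrite lt0n; apply/eqP => /row_deg0_const Ni.
have Ni0 : row i N = 0.
  have : in_im N (row i N) by exists 'e_i; exact: rowE.
  by rewrite Ni => /NM/noconst ->; rewrite map_mx0.
have := indN 'e_i; rewrite -rowE Ni0 => /(_ erefl)/matrixP/(_ 0 i).
by rewrite !mxE !eqxx /= => /eqP; rewrite oner_eq0.
Qed.

Lemma minimal_basis_row_deg_le1 k n (M : 'M[{poly F}]_(k, n)) :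
  right_invertible M -> (forall i, (row_deg M i <= 1)%N) ->
  (forall c, in_im M (map_mx polyC c) -> c = 0) -> minimal_basis M.
Proof.
move=> Minv Mdeg noconst; split=> [|k' N [indN imMN]].
  exact: right_invertible_rows_indep.
have sumM : (sum_row_deg M <= k)%N.
  by rewrite -[X in (_ <= X)%N]card_ord -sum1_card; apply: leq_sum => i _.
have sumN : (k' <= sum_row_deg N)%N.
  rewrite -[X in (X <= _)%N]card_ord -sum1_card; apply: leq_sum => i _.
  by apply: (row_deg_gt0 (M := M)) => // v /imMN.
have le_kk' : (k <= k')%N.
  by apply: (right_invertible_im_sub_leq (N := N) Minv) => v /imMN.
exact: leq_trans sumM (leq_trans le_kk' sumN).
Qed.

End PolyMatrix.

Section ShiftMatrix.
Variables (F : fieldType) (n' : nat).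
Local Notation n := n'.+1.
Local Notation lo i := (widen_ord (leqnSn n') i).
Local Notation hi i := (lift ord0 i).

Definition shift_mx : 'M[{poly F}]_(n', n) := \matrix_i ('X *: 'e_(lo i) - 'e_(hi i)).

Definition powers_row : 'rV[{poly F}]_n := \row_j 'X^j.

Definition shift_rinv : 'M[{poly F}]_(n, n') :=
  \matrix_(j, l) (if (l < j)%N then - 'X^(j - l.+1) else 0).

Lemma shift_mxE p (B : 'M_(n, p)) i l :
  (shift_mx *m B) i l = 'X * B (lo i) l - B (hi i) l.
Proof.
have /rowP/(_ l) : row i (shift_mx *m B) = 'X *: row (lo i) B - row (hi i) B.
  by rewrite row_mul rowK mulmxBl -scalemxAl -!rowE.
by rewrite !mxE.
Qed.

Lemma shift_mx_powers : shift_mx *m powers_row^T = 0.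
Proof. by apply/matrixP => i l; rewrite shift_mxE !mxE /= exprS subrr. Qed.

Lemma shift_mx_rinv : shift_mx *m shift_rinv = 1%:M.
Proof.
apply/matrixP => i l; rewrite shift_mxE !mxE lift0 ltnS.
case: (ltngtP l i) => [li|il|/val_inj->]; last first.
- by rewrite subnn mulr0 sub0r opprK eqxx.
- by rewrite mulr0 subr0 -val_eqE ltn_eqF.
- by rewrite /= subSS -[(i - l)%N]subnSK // exprS mulrN opprK addNr -val_eqE gtn_eqF.
Qed.

Lemma shift_mx_ker (c : 'cV_n) : shift_mx *m c = 0 -> c = c 0 0 *: powers_row^T.
Proof.
move=> /matrixP Kc0.
suff cE k (lt_kn : (k < n)%N) : c (Ordinal lt_kn) 0 = 'X^k * c 0 0.
  by apply/matrixP => -[j lt_jn] l; rewrite (ord1 l) !mxE cE mulrC.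
elim: k lt_kn => [|k IHk] lt_kn; first by rewrite mul1r; congr (c _ 0); exact: val_inj.
pose i : 'I_n' := Ordinal (lt_kn : (k < n')%N).
have -> : Ordinal lt_kn = hi i by exact: val_inj.
have /eqP := Kc0 i 0; rewrite shift_mxE !mxE subr_eq0 => /eqP <-.
rewrite exprS -mulrA -(IHk (ltnW lt_kn)); congr ('X * c _ 0); exact: val_inj.
Qed.

Lemma const_mul_powers_eq0 (e : 'rV[F]_n) : map_mx polyC e *m powers_row^T = 0 -> e = 0.
Proof.
move=> /matrixP/(_ 0 0); rewrite !mxE => e0; apply/rowP => j.
have := congr1 (coefp j) e0; rewrite /= coef0 mxE.
under eq_bigr do rewrite !mxE mul_polyC.
rewrite coef_sum (bigD1 j) //= coefZ coefXn eqxx mulr1 big1 ?addr0 // => l ne_lj.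
by rewrite coefZ coefXn val_eqE eq_sym (negbTE ne_lj) mulr0.
Qed.

End ShiftMatrix.

Lemma sum_prim_root_expr (R : idomainType) n (z : R) k : n.-primitive_root z ->
  \sum_(m < n) (z ^+ k) ^+ m = if (n %| k)%N then n%:R else 0.
Proof.
move=> z_prim; rewrite (prim_order_dvd z_prim); case: eqP => [->|/eqP z_k_neq1].
  by rewrite (eq_bigr (fun=> 1)) ?sumr_const ?card_ord // => m _; rewrite expr1n.
have : (z ^+ k - 1) * \sum_(m < n) (z ^+ k) ^+ m = 0.
  by rewrite -subrX1 exprAC (prim_expr_order z_prim) expr1n subrr.
by move/eqP; rewrite mulf_eq0 subr_eq0 (negbTE z_k_neq1) => /eqP.
Qed.

Lemma dvdn_ordD_sub n (i j : 'I_n) : (n %| i + (n - j))%N = (i == j).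
Proof.
apply/idP/eqP => [/dvdnP[q def_q]|<-]; last by rewrite subnKC ?dvdnn // ltnW.
apply: val_inj; have := ltn_ord i; have := ltn_ord j.
by case: q def_q => [|[|q]] /=; lia.
Qed.

Local Notation polyC_mx A := (map_mx polyC A).

Section DiscreteFourier.
Variables (F : fieldType) (n' : nat) (a : F).
Local Notation n := n'.+1.
Hypothesis a_prim : n.-primitive_root a.

Definition dft_mx : 'M[F]_n := Vandermonde n (\row_(m < n) a ^+ m).
Definition idft_mx : 'M[F]_n := Vandermonde n (\row_(m < n) a ^+ (n - m)).

Lemma dft_mxK : dft_mx *m idft_mx = n%:R%:M.
Proof.
apply/matrixP => i j; rewrite !mxE.
under eq_bigr do rewrite !mxE exprAC -exprMn -exprD.
by rewrite (sum_prim_root_expr _ a_prim) dvdn_ordD_sub; case: eqP.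
Qed.

Let n_neq0 : n%:R != 0 :> F := prim_root_natf_neq0 a_prim.

Lemma idft_mx_rinv : idft_mx *m (n%:R^-1 *: dft_mx) = 1%:M.
Proof. by apply: mulmx1C; rewrite -scalemxAl dft_mxK scale_scalar_mx mulVf ?n_neq0. Qed.

Lemma idft_mxK : idft_mx *m dft_mx = n%:R%:M.
Proof.
have := congr1 ( *:%R n%:R) idft_mx_rinv.
by rewrite -scalemxAr scalerA mulfV ?n_neq0 // scale1r => ->; rewrite scale_scalar_mx mulr1.
Qed.

Lemma polyC_mx_idftK : polyC_mx idft_mx *m polyC_mx dft_mx = n%:R%:M.
Proof. by rewrite -map_mxM idft_mxK map_scalar_mx rmorph_nat. Qed.

Lemma polyC_mx_dftK : polyC_mx dft_mx *m polyC_mx idft_mx = n%:R%:M.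
Proof. by rewrite -map_mxM dft_mxK map_scalar_mx rmorph_nat. Qed.

Lemma natr_mul_polyC_inv : n%:R * (n%:R^-1)%:P = 1 :> {poly F}.
Proof. by rewrite -(rmorph_nat polyC) -polyCM mulfV ?n_neq0. Qed.

Lemma Hmin_shift_idft : Hmin n a = shift_mx F n' *m polyC_mx idft_mx.
Proof. by apply/matrixP => i m; rewrite shift_mxE !mxE /= exprS mulrC. Qed.

Lemma Gvand_powers_dft : Gvand n a = powers_row F n' *m (polyC_mx dft_mx)^T.
Proof.
by apply/rowP => m; rewrite !mxE; apply: eq_bigr => v _; rewrite !mxE exprAC -exprM.
Qed.

Lemma row_deg_Hmin i : (row_deg (Hmin n a) i <= 1)%N.
Proof.
apply/bigmax_leqP => m _; rewrite mxE -polyCN size_MXaddC.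
by case: ifP => //= _; rewrite size_polyC leq_b1.
Qed.

Lemma Hmin_right_invertible : right_invertible (Hmin n a).
Proof.
exists (polyC_mx (n%:R^-1 *: dft_mx) *m shift_rinv F n').
rewrite Hmin_shift_idft -mulmxA (mulmxA (polyC_mx _)) -map_mxM idft_mx_rinv.
by rewrite map_mx1 mul1mx shift_mx_rinv.
Qed.

Lemma Gvand_mul_trHmin : Gvand n a *m (Hmin n a)^T = 0.
Proof.
rewrite Gvand_powers_dft Hmin_shift_idft trmx_mul mulmxA -(mulmxA (powers_row _ _)).
rewrite -trmx_mul polyC_mx_idftK tr_scalar_mx mul_mx_scalar -scalemxAl.
by rewrite -[powers_row _ _]trmxK -trmx_mul shift_mx_powers trmx0 scaler0.
Qed.

Lemma Hmin_no_const c : in_im (Hmin n a) (polyC_mx c) -> c = 0.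
Proof.
case=> u c_eq.
have /const_mul_powers_eq0 c_dft0 : polyC_mx (c *m dft_mx) *m (powers_row F n')^T = 0.
  rewrite map_mxM c_eq Hmin_shift_idft -!mulmxA (mulmxA (polyC_mx idft_mx)).
  by rewrite polyC_mx_idftK mul_scalar_mx -scalemxAr shift_mx_powers scaler0 mulmx0.
have /eqP : n%:R *: c = 0 by rewrite -mul_mx_scalar -dft_mxK mulmxA c_dft0 mul0mx.
by rewrite scalemx_eq0 (negbTE n_neq0) => /eqP.
Qed.

Lemma Hmin_ker_sub_im v : v *m (Hmin n a)^T = 0 -> in_im (Gvand n a) v.
Proof.
move=> vH0; set c := polyC_mx idft_mx *m v^T.
have /shift_mx_ker c_powers : shift_mx F n' *m c = 0.
  by rewrite mulmxA -Hmin_shift_idft -[Hmin n a]trmxK -trmx_mul vH0 trmx0.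
have nv : n%:R *: v^T = c 0 0 *: (Gvand n a)^T.
  rewrite -mul_scalar_mx -polyC_mx_dftK -mulmxA -/c {1}c_powers -scalemxAr.
  by rewrite Gvand_powers_dft trmx_mul trmxK.
have vT : v^T = (n%:R^-1)%:P *: (n%:R *: v^T).
  by rewrite scalerA mulrC natr_mul_polyC_inv scale1r.
exists ((c 0 0 * (n%:R^-1)%:P)%:M); rewrite mul_scalar_mx -[v]trmxK vT nv.
by rewrite !linearZ /= trmxK scalerA mulrC.
Qed.

End DiscreteFourier.

Theorem theorem3p3 (F : finFieldType) (n : nat) (alpha : F)
    (Hord : n.-primitive_root alpha) :
  minimal_basis (Hmin n alpha) /\ right_invertible (Hmin n alpha) /\
  Gvand n alpha *m (Hmin n alpha)^T = 0 /\
  parity_check (Gvand n alpha) (Hmin n alpha) /\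
  (forall v : 'rV[{poly F}]_n, in_im (Gvand n alpha) v <-> v *m (Hmin n alpha)^T = 0).
Proof.
case: n Hord => [|n'] prim; first by have := prim_order_gt0 prim.
have GH0 := Gvand_mul_trHmin prim.
have Hinv := Hmin_right_invertible prim.
have im_ker v : in_im (Gvand n'.+1 alpha) v <-> v *m (Hmin n'.+1 alpha)^T = 0.
  split=> [[u ->]|]; last exact: Hmin_ker_sub_im.
  by rewrite -mulmxA GH0 mulmx0.
split; first exact: minimal_basis_row_deg_le1 Hinv (@row_deg_Hmin _ _ _) (Hmin_no_const prim).
by do 2!split=> //; split.
Qed.
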